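(* Let $(\mathfrak g,d,[\,,\,])$ be a differential graded Lie algebra over $k=\mathbb R$ or $\mathbb C$ such that each $\mathfrak g^i$ is a normed space, $d$ and $[\,,\,]$ are continuous, and there are a graded subspace $\mathbf H\subset\mathfrak g$, a projection $P_{\mathbf H}:\mathfrak g\to\mathbf H$ and a linear map $\eta:\mathfrak g\to\mathfrak g[-1]$ with $\mathrm{Id}=P_{\mathbf H}+d\eta+\eta d$ (also on the completion). Let $(\mathfrak g,\mu_* )$ be the $L_\infty$-algebra with $\mu_1=d$, $\mu_2(v_1,v_2)=(d\eta+\eta d)[v_1,v_2]$, and $\mu_n(v_1,\dots,v_n)=(-1)^n\sum_{\sigma\in Sh(n-1,n)}(-1)^{\tilde\sigma}e(\sigma)\eta[\mu_{n-1}(v_{\sigma(1)},\dots,v_{\sigma(n-1)}),v_{\sigma(n)}]$ for $n\ge3$. Fix a basis $[\gamma_\alpha]$ of $H^1(\mathfrak g,d)$ with representatives $\gamma_\alpha\in\ker d\cap\mathfrak g^1$, coordinates $t=(t^\alpha)$, and let $\Gamma(t)=\sum_{n\ge1}\Gamma_n(t)$ with $\Gamma_1=\sum_\alpha\gamma_\alpha t^\alpha$ and $\Gamma_n=-\frac12\eta\big(\sum_{k=1}^{n-1}[\Gamma_k(t),\Gamma_{n-k}(t)]\big)$ for $n\ge2$. Then for every $t$ (in the domain of convergence of $\Gamma(t)$) in the Kuranishi space $\mathcal K^0_{\mathfrak g}=\{t : P_{\mathbf H}[\Gamma(t),\Gamma(t)]=0\}$ one has $\mu_2(\Gamma(t),\Gamma(t))=[\Gamma(t),\Gamma(t)]$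 and $\mu_n(\Gamma(t),\dots,\Gamma(t))=0$ for all $n\ge3$; consequently on $\mathcal K^0_{\mathfrak g}$ the $L_\infty$ Maurer–Cartan equation $\sum_{k\ge1}\frac{(-1)^{k(k+1)/2}}{k!}\mu_k(\Gamma(t),\dots,\Gamma(t))=0$ degenerates into the Maurer–Cartan equation $d\Gamma(t)+\frac12[\Gamma(t),\Gamma(t)]=0$ of the differential graded Lie algebra $(\mathfrak g,d,[\,,\,])$.
   Context: $\mathfrak g[n]^i=\mathfrak g^{i+n}$, so $\eta$ lowers degree by one; $\tilde v$ is the parity of the degree of homogeneous $v$. $Sh(n-1,n)$ is the set of permutations $\sigma$ of $\{1,\dots,n\}$ with $\sigma(1)<\dots<\sigma(n-1)$; $\tilde\sigma$ is its parity and the Koszul sign $e(\sigma)$ is defined by $v_{\sigma(1)}\wedge\dots\wedge v_{\sigma(n)}=(-1)^{\tilde\sigma}e(\sigma)v_1\wedge\dots\wedge v_n$. The coordinates $t^\alpha$ are even, so $\Gamma(t)$ has degree $1$. *)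

From HB Require Import structures.
From mathcomp Require Import all_boot all_order all_algebra all_fingroup.
From mathcomp Require Import all_classical all_reals all_analysis.
From mathcomp Require Import complex.
Import Order.TTheory GRing.Theory Num.Theory.
Import numFieldNormedType.Exports.

Set Implicit Arguments.
Unset Strict Implicit.
Unset Printing Implicit Defensive.

Local Open Scope classical_set_scope.
Local Open Scope ring_scope.

Definition RorC (R : realType) (b : bool) : numFieldType :=
  if b then (R[i] : numFieldType) else (R : numFieldType).

Section DGLA.
Variables (K : numFieldType) (V : normedModType K).

Definition par (i : int) : bool := odd `|i|%N.

Definition sgn (i j : int) : K := (-1) ^+ (par i && par j).

Definition is_subspace (A : set V) : Prop :=
  A 0 /\ forall (a : K) (x y : V), A x -> A y -> A (a *: x + y).

Definition graded_direct_sum (gr : int -> set V) : Prop :=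
  [/\ forall i, is_subspace (gr i),
      forall v : V, exists (s : seq int) (x : int -> V),
          (forall i, gr i (x i)) /\ v = \sum_(i <- s) x i
    & forall (s : seq int) (x : int -> V), uniq s -> (forall i, gr i (x i)) ->
          \sum_(i <- s) x i = 0 -> forall i, i \in s -> x i = 0].

Record is_dgla (gr : int -> set V) (d : V -> V) (br : V -> V -> V) : Prop := {
  dgla_graded : graded_direct_sum gr;
  dgla_d_linear : linear d;
  dgla_br_linear_l : forall y, linear (fun x => br x y);
  dgla_br_linear_r : forall x, linear (br x);
  dgla_d_deg : forall i x, gr i x -> gr (i + 1) (d x);
  dgla_br_deg : forall i j x y, gr i x -> gr j y -> gr (i + j) (br x y);
  dgla_dd : forall x, d (d x) = 0;
  dgla_antisym : forall i j x y, gr i x -> gr j y ->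
      br x y = - (sgn i j *: br y x);
  dgla_leibniz : forall i x y, gr i x ->
      d (br x y) = br (d x) y + ((-1) ^+ par i) *: br x (d y);
  dgla_jacobi : forall i j x y z, gr i x -> gr j y ->
      br x (br y z) = br (br x y) z + sgn i j *: br y (br x z) }.

(* each g^i carries the (restricted) norm of V; d and [ , ] are continuous *)
Record dgla_continuous (gr : int -> set V) (d : V -> V) (br : V -> V -> V) : Prop := {
  cont_d : forall i, {within gr i, continuous d};
  cont_br : forall i j, {within gr i `*` gr j, continuous (fun z : V * V => br z.1 z.2)} }.

Record hodge_data (gr : int -> set V) (d : V -> V)
    (H : set V) (P eta : V -> V) : Prop := {
  hd_H_sub : forall i, is_subspace (H `&` gr i);
  hd_H_graded : forall h, H h -> exists (s : seq int) (x : int -> V),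
      (forall i, (H `&` gr i) (x i)) /\ h = \sum_(i <- s) x i;
  hd_P_linear : linear P;
  hd_P_deg : forall i x, gr i x -> gr i (P x);
  hd_P_im : forall v, H (P v);
  hd_P_id : forall h, H h -> P h = h;
  hd_eta_linear : linear eta;
  hd_eta_deg : forall i x, gr i x -> gr (i - 1) (eta x);
  hd_decomp : forall v, v = P v + d (eta v) + eta (d v) }.

Record H1_basis (gr : int -> set V) (d : V -> V) (m : nat) (gam : 'I_m -> V) : Prop := {
  h1_deg : forall a, gr 1 (gam a);
  h1_closed : forall a, d (gam a) = 0;
  h1_indep : forall (c : 'I_m -> K) (y : V), gr 0 y ->
      \sum_(a < m) c a *: gam a = d y -> forall a, c a = 0;
  h1_span : forall x, gr 1 x -> d x = 0 ->
      exists (c : 'I_m -> K) (y : V), gr 0 y /\ x = \sum_(a < m) c a *: gam a + d y }.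

Definition is_shuffle (n : nat) (s : 'S_n) : bool :=
  [forall a : 'I_n, forall b : 'I_n, ((a < b)%N && (b < n.-1)%N) ==> (s a < s b)%N].

(* Koszul sign e(s) for homogeneous v_0..v_{n-1} of degrees deg:
   v_s(0) /\ ... /\ v_s(n-1) = (-1)^s e(s) v_0 /\ ... /\ v_{n-1} *)
Definition koszul (n : nat) (deg : 'I_n -> int) (s : 'S_n) : K :=
  \prod_(a < n) \prod_(b < n | (a < b)%N && (s b < s a)%N)
     (-1) ^+ (par (deg (s a)) && par (deg (s b))).

Variables (d : V -> V) (br : V -> V -> V) (eta : V -> V).

Fixpoint linf_mu (n : nat) : ('I_n -> int) -> ('I_n -> V) -> V :=
  match n with
  | 0 => fun _ _ => 0
  | n'.+1 => fun deg v =>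
     match n' with
     | 0 => d (v ord0)
     | 1 => d (eta (br (v ord0) (v (inord 1)))) + eta (d (br (v ord0) (v (inord 1))))
     | _ => (-1) ^+ n'.+1 *:
         \sum_(s : 'S_n'.+1 | is_shuffle s)
            (((-1) ^+ odd_perm s * koszul deg s) *:
              eta (br (linf_mu (fun i => deg (s (widen_ord (leqnSn n') i)))
                               (fun i => v (s (widen_ord (leqnSn n') i))))
                      (v (s ord_max))))
     end
  end.

Variables (m : nat) (gam : 'I_m -> V).

Definition Gamma1 (t : 'I_m -> K) : V := \sum_(a < m) t a *: gam a.

(* [:: Gamma_1(t); ...; Gamma_n(t)] *)
Fixpoint Gammas (t : 'I_m -> K) (n : nat) : seq V :=
  match n with
  | 0 => [::]
  | n'.+1 => let s := Gammas t n' in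
      rcons s (if n' is 0 then Gamma1 t
               else - (2^-1 *: eta (\sum_(k < n') br s`_k s`_(n' - k.+1)%N)))
  end.

Definition Gamma_n (t : 'I_m -> K) (n : nat) : V := (Gammas t n)`_n.-1.

End DGLA.

Arguments linf_mu {K V} d br eta n _ _.

From HB Require Import structures.
From mathcomp Require Import all_boot all_order all_algebra all_fingroup.
From mathcomp Require Import all_classical all_reals all_analysis.
From mathcomp Require Import complex.
Import Order.TTheory GRing.Theory Num.Theory.
Import numFieldNormedType.Exports.
Set Implicit Arguments.
Unset Strict Implicit.
Unset Printing Implicit Defensive.

Local Open Scope classical_set_scope.
Local Open Scope ring_scope.

(* For G of degree 1 with P_H [G,G] = 0, the homotopy formula Id = P_H + d eta + eta d
   gives mu_2(G,G) = (d eta + eta d)[G,G] = [G,G].  Every mu_n(G,...,G) with n >= 3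
   is a combination of eta [mu_(n-1)(G,...,G), G]; for n = 3 this is eta [[G,G],G],
   which vanishes by the Jacobi identity for an odd element, and the higher ones then
   vanish by induction.  Hence the L_infty Maurer-Cartan series stops after its
   second term, which is -(dG + 1/2 [G,G]). *)

Lemma linear_fun0 (K : numFieldType) (U : lmodType K) (f : U -> U) :
  linear f -> f 0 = 0.
Proof. by move=> f_lin; have := f_lin (-1) 0 0; rewrite scaler0 addr0 scaleN1r addNr. Qed.

Lemma cvg_to_iff_eq (T : Type) (F : set_system T) {FF : ProperFilter F}
    (U : topologicalType) (f : T -> U) (L : U) :
  hausdorff_space U -> f @ F --> L -> forall l, f @ F --> l <-> l = L.
Proof.
move=> U_sep fL l; split=> [fl|->//].
exact: (@cvg_unique _ U_sep (f @ F) _ _ _ fl fL).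
Qed.

Lemma series_cvg_eventually0 (K : numFieldType) (U : normedModType K)
    (u : U ^nat) (N : nat) :
  (forall k, (N <= k)%N -> u k = 0) -> series u @ \oo --> \sum_(0 <= k < N) u k.
Proof.
move=> u0; apply: cvg_near_cst; near=> n.
rewrite /series /= (big_cat_nat (n := N)) //=; last by near: n; exists N.
by rewrite [X in _ + X]big1_seq ?addr0 // => k /andP[_]; rewrite mem_index_iota => /andP[/u0].
Unshelve. all: by end_near.
Qed.

Section DGLAIdentities.
Variables (K : numFieldType) (V : normedModType K).
Variables (gr : int -> set V) (d : V -> V) (br : V -> V -> V).
Hypothesis dgla : is_dgla gr d br.

Lemma dgla_br_brxx_deg1 (x : V) : gr 1 x -> br (br x x) x = 0.
Proof.
move=> x1; have xx2 : gr 2 (br x x) := dgla_br_deg dgla x1 x1.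
have antisym := dgla_antisym dgla xx2 x1.
have jacobi := dgla_jacobi dgla x x1 x1.
rewrite [sgn _ _ _]/= scale1r in antisym; rewrite [sgn _ _ _]/= scaleN1r in jacobi.
set X := br (br x x) x in antisym jacobi *; set Y := br x (br x x) in antisym jacobi *.
(* Jacobi gives Y = X - Y and antisymmetry X = - Y, so 3 Y = 0 *)
have Y3 : 3%:R *: Y = 0.
  have YYX : Y + Y = X by rewrite {1}jacobi addrNK.
  by rewrite scaler_nat !mulrS mulr0n addr0 addrA YYX antisym addNr.
move: Y3 => /eqP; rewrite scaler_eq0 pnatr_eq0 /= => /eqP Y0.
by rewrite antisym Y0 oppr0.
Qed.

End DGLAIdentities.

Section LinfBrackets.
Variables (K : numFieldType) (V : normedModType K).
Variables (d : V -> V) (br : V -> V -> V) (eta : V -> V).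

Local Notation mu n i G := (linf_mu d br eta n (fun _ => i) (fun _ => G)).

Lemma linf_mu2_diag (i : int) (G : V) :
  mu 2 i G = d (eta (br G G)) + eta (d (br G G)).
Proof. by []. Qed.

Lemma linf_muSSS_diag_eq0 (n : nat) (i : int) (G : V) :
  eta (br (mu n.+2 i G) G) = 0 -> mu n.+3 i G = 0.
Proof.
move=> eta_br0.
change ((-1) ^+ n.+3 *: \sum_(s : 'S_n.+3 | is_shuffle s)
   (((-1) ^+ odd_perm s * koszul K (fun _ => i) s) *: eta (br (mu n.+2 i G) G)) = 0).
by rewrite eta_br0 big1 ?scaler0 // => s _; rewrite scaler0.
Qed.

Lemma linf_mu_diag_eq0_from3 (i : int) (G : V) :
  linear eta -> linear (br^~ G) -> eta (br (br G G) G) = 0 -> mu 2 i G = br G G ->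
  forall n, (3 <= n)%N -> mu n i G = 0.
Proof.
move=> eta_lin brG_lin eta_brGGG mu2; suff mu_SSS n : mu n.+3 i G = 0.
  by case=> [|[|[|n]]].
elim: n => [|n IHn]; apply: linf_muSSS_diag_eq0; first by rewrite mu2.
by rewrite IHn (linear_fun0 brG_lin) (linear_fun0 eta_lin).
Qed.

Lemma linf_MC_series_cvg (i : int) (G : V) :
  (forall n, (3 <= n)%N -> mu n i G = 0) ->
  series (fun k => ((-1) ^+ ((k.+1 * k.+2)./2) / (k.+1)`!%:R) *: mu k.+1 i G) @ \oo
    --> - (d G + 2^-1 *: mu 2 i G).
Proof.
move=> mu_ge3; rewrite [X in _ --> X](_ : _ =
  \sum_(0 <= k < 2) ((-1) ^+ ((k.+1 * k.+2)./2) / (k.+1)`!%:R) *: mu k.+1 i G).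
  by apply: series_cvg_eventually0 => -[|[|k]] // _; rewrite mu_ge3 ?scaler0.
rewrite !big_nat_recl // big_geq // addr0 /= expr1 divr1 scaleN1r opprD.
by rewrite (_ : 2`! = 2)%N // -signr_odd /= expr1 mulN1r scaleNr.
Qed.

End LinfBrackets.

Lemma hodge_homotopy_ker_P (K : numFieldType) (V : normedModType K)
    (gr : int -> set V) (d : V -> V) (H : set V) (P eta : V -> V) (v : V) :
  hodge_data gr d H P eta -> P v = 0 -> d (eta v) + eta (d v) = v.
Proof. by move=> hodge Pv0; rewrite [RHS](hd_decomp hodge) Pv0 add0r. Qed.

Theorem mainTheorem5 (R : realType) (b : bool) (V : normedModType (RorC R b))
    (gr : int -> set V) (d : V -> V) (br : V -> V -> V)
    (H : set V) (P eta : V -> V) (m : nat) (gam : 'I_m -> V) :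
  is_dgla gr d br -> dgla_continuous gr d br ->
  hodge_data gr d H P eta -> H1_basis gr d gam ->
  forall (t : 'I_m -> RorC R b) (G : V),
    (* t in the domain of convergence: Gamma(t) = sum_{n>=1} Gamma_n(t) = G in g^1 *)
    series (fun n => Gamma_n br eta gam t n.+1) @ \oo --> G -> gr 1 G ->
    (* t in the Kuranishi space *)
    P (br G G) = 0 ->
    [/\ linf_mu d br eta 2 (fun _ => 1) (fun _ => G) = br G G,
        forall n, (3 <= n)%N -> linf_mu d br eta n (fun _ => 1) (fun _ => G) = 0
      & series (fun k => ((-1) ^+ ((k.+1 * k.+2)./2) / (k.+1)`!%:R)
                           *: linf_mu d br eta k.+1 (fun _ => 1) (fun _ => G))
            @ \oo --> 0
        <-> d G + 2^-1 *: br G G = 0].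
Proof.
move=> dgla _ hodge _ t G _ G1 PGG0.
have mu2 : linf_mu d br eta 2 (fun _ => 1) (fun _ => G) = br G G.
  by rewrite linf_mu2_diag (hodge_homotopy_ker_P hodge PGG0).
have eta_lin := hd_eta_linear hodge.
have eta_brGGG : eta (br (br G G) G) = 0.
  by rewrite (dgla_br_brxx_deg1 dgla G1) (linear_fun0 eta_lin).
have mu_ge3 :=
  linf_mu_diag_eq0_from3 eta_lin (dgla_br_linear_l dgla G) eta_brGGG mu2.
split=> //.
rewrite (cvg_to_iff_eq (@norm_hausdorff _ V) (linf_MC_series_cvg mu_ge3)) mu2.
split=> [/esym/eqP|->]; last by rewrite oppr0.
by rewrite oppr_eq0 => /eqP.
Qed.
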